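(* Let $x\in V(T)$, let $s$ be a worst-case scenario of $T$ with respect to $x$, and let $y\in V(T)\setminus\{x\}$ be a prime broadcast center of $T$ under $s$ such that $w^{s}_{a,b}=w^{\alpha_{x,y}}_{a,b}$ for every $(a,b)\in P_{x,y}\cup E(T_{y,x})$. Let $\mu$ be the neighbour of $y$ on the $y$–$x$ path. Suppose $y$ has $h\ge1$ neighbours $u_1,\dots,u_h$ in $\bar T_{y,x}$, and let $a_1\ge a_2\ge\dots\ge a_h$ be the values $w^s_{y,u_k}+b^s(u_k,\bar T_{u_k,y})$, $1\le k\le h$, sorted in nonincreasing order. Let $\tau_0$ be the smallest index $k\in\{1,\dots,h\}$ maximizing $k\rho+a_k$. If $$w^s_{y,\mu}+b^s(\mu,T_{y,x})\ge a_{\tau_0},$$ then $\alpha_{x,y}$ is a worst-case scenario of $T$ with respect to $x$.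
   Context: $T$ is a finite tree; each edge $(u,v)$ carries an interval $[w^-_{u,v},w^+_{u,v}]$ of non-negative reals. A scenario $s$ assigns to every edge a weight $w^s_{u,v}\in[w^-_{u,v},w^+_{u,v}]$; $C$ is the set of all scenarios. A constant $\rho>0$ is fixed. Broadcast time (postal model): for a subtree $G$ of $T$ and $u\in V(G)$, $b^s(u,G)=0$ if $u$ has no neighbour in $G$; otherwise, if $v_1,\dots,v_h$ are the neighbours of $u$ in $G$ and $G_{v}$ is the component of $G-u$ containing $v$, $b^s(u,G)=\min_{\pi}\max_{1\le k\le h}\big(k\rho+w^s_{u,v_{\pi(k)}}+b^s(v_{\pi(k)},G_{v_{\pi(k)}})\big)$ over permutations $\pi$. $B^s=\{u: b^s(u,T)\le b^s(v,T)\ \forall v\}$. For distinct $x,y$, $T_{x,y}$ is the component of $T-x$ containing $y$ and $\bar T_{x,y}$ the subtree induced by $V(T)\setminus V(T_{x,y})$. $P_{x,y}$ is the set of edges of the $x$–$y$ path. A vertex $\hat\kappa\in B^s$ is a prime broadcast center under $s$ if $b^s(\hat\kappa,\bar T_{\hat\kappa,u})\ge b^s(u,\bar T_{u,\hat\kappa})$ for every neighbour $u$ of $\hat\kappa$. Regret $r^s_{x,y}=b^s(x,T)-b^s(y,T)$; $\mathrm{max\_r}(x)=\max\{r^s_{x,y}:y\in V(T),s\in C\}$; $s'$ is a worst-case scenario w.r.t. $x$ if $\mathrm{max\_r}(x)=r^{s'}_{x,y'}$ for some $y'$. Base scenario: for $v\neq x$, $\alpha_{x,v}$ has $w^{\alpha_{x,v}}_{a,b}=w^+_{a,b}$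 if $(a,b)\in P_{x,v}\cup E(\bar T_{v,x})$ and $w^-_{a,b}$ otherwise. *)

From HB Require Import structures.
From mathcomp Require Import all_boot all_order all_algebra.
From mathcomp Require Import boolp reals.
Set Implicit Arguments. Unset Strict Implicit. Unset Printing Implicit Defensive.
Import Order.TTheory GRing.Theory Num.Theory.
Local Open Scope ring_scope.

Section Broadcast.
Variables (R : realType) (V : finType) (e : rel V).

(** A finite tree: e symmetric, irreflexive, connected, with |V|-1 edges
    (each undirected edge counted as two ordered pairs). *)
Definition is_tree : Prop :=
  [/\ symmetric e, irreflexive e, (forall a b : V, connect e a b) &
      #|[set p : V * V | e p.1 p.2]| = ((#|V| - 1).*2)%N ].

Definition comp (S : {set V}) (u v : V) : {set V} :=
  [set z in S :\ u |
     connect (fun a b => [&& e a b, a \in S :\ u & b \in S :\ u]) v z].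

Definition Tsub (x y : V) : {set V} := comp [set: V] x y.
Definition Tbar (x y : V) : {set V} := ~: Tsub x y.

Definition inE_set (G : {set V}) (a b : V) : bool := [&& e a b, a \in G & b \in G].

Definition on_path (x y a b : V) : Prop :=
  exists p : seq V, [/\ path e x p, last x p = y, uniq (x :: p) &
    exists2 i, (i < size p)%N &
      ((nth x (x :: p) i == a) && (nth x (x :: p) i.+1 == b)) ||
      ((nth x (x :: p) i == b) && (nth x (x :: p) i.+1 == a))].

Definition maxl (l : seq R) : R :=
  if l is r :: t then foldr Num.max r t else 0.
Definition minl (l : seq R) : R :=
  if l is r :: t then foldr Num.min r t else 0.

(** Broadcast time b^s(u,G) in the postal model, G given by its vertex set S,
    computed with fuel (the fuel #|S| is always sufficient). *)
Fixpoint bfuel (rho : R) (s : V -> V -> R) (n : nat) (u : V) (S : {set V}) : R :=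
  match n with
  | 0 => 0
  | n'.+1 =>
    let N := enum [set v in S | e u v] in
    let c (v : V) := s u v + bfuel rho s n' v (comp S u v) in
    match N with
    | [::] => 0
    | v0 :: _ =>
      minl [seq maxl [seq (i.+1)%:R * rho + c (nth v0 q i) | i <- iota 0 (size q)]
           | q <- permutations N]
    end
  end.

Definition btime (rho : R) (s : V -> V -> R) (u : V) (S : {set V}) : R :=
  bfuel rho s #|S| u S.

Definition scenario (wlo whi s : V -> V -> R) : Prop :=
  forall a b, e a b -> wlo a b <= s a b <= whi a b /\ s a b = s b a.

Definition regret rho (s : V -> V -> R) (x y : V) : R :=
  btime rho s x [set: V] - btime rho s y [set: V].

Definition worst_case rho (wlo whi : V -> V -> R) (x : V) (s' : V -> V -> R) : Prop :=
  scenario wlo whi s' /\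
  exists y', forall (s : V -> V -> R) (y : V), scenario wlo whi s ->
    regret rho s x y <= regret rho s' x y'.

Definition in_center rho (s : V -> V -> R) (u : V) : Prop :=
  forall v, btime rho s u [set: V] <= btime rho s v [set: V].

Definition prime_center rho (s : V -> V -> R) (k : V) : Prop :=
  in_center rho s k /\
  forall u, e k u -> btime rho s u (Tbar u k) <= btime rho s k (Tbar k u).

Definition alpha (wlo whi : V -> V -> R) (x v : V) : V -> V -> R :=
  fun a b => if `[< on_path x v a b \/ inE_set (Tbar v x) a b >] then whi a b
             else wlo a b.

End Broadcast.

(* Let B and B' be the times y needs to inform its side of the edge y-mu (the side
   away from x) under s and under alpha = alpha_{x,y}, and M the time mu needs to
   inform the other side under s.  The two scenarios agree on mu's side and on the
   edge y-mu, and alpha uses the upper weights on y's side, so B <= B'.  Primality of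
   y gives M <= B, hence at every vertex of the path from mu to x the branch towards
   y dominates all other branches under s; it is served first, and the gain B' - B of
   alpha survives up to x: b^alpha(x) - b^s(x) >= B' - B.  At y, alpha finishes within
   max (rho + w_{y,mu} + M, rho + B'), whereas under s the condition on a_{tau0}
   yields tau0 + 1 children of cost at least a_{tau0}, so b^s(y) >= rho + B, and also
   b^s(y) >= rho + w_{y,mu} + M.  Thus r^s_{x,y} <= r^alpha_{x,y}, and since y is a
   broadcast center under s, r^s_{x,y} is already the maximal regret. *)

From Pilot Require Import Defs.
From HB Require Import structures.
From mathcomp Require Import all_boot all_order all_algebra.
From mathcomp Require Import boolp reals.
From mathcomp Require Import zify lra.
Import Order.TTheory GRing.Theory Num.Theory.
Local Open Scope ring_scope.
Set Implicit Arguments. Unset Strict Implicit. Unset Printing Implicit Defensive.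

Section SeqExtrema.
Variable R : realType.

Lemma maxl_ge (l : seq R) z : z \in l -> z <= maxl l.
Proof.
case: l => [//|r t] /=; rewrite inE => /orP [/eqP ->|].
  by elim: t => [|a t IH] //=; rewrite le_max IH orbT.
elim: t => [//|a t IH]; rewrite inE => /orP [/eqP ->|z_t] /=.
  by rewrite le_max lexx.
by rewrite le_max (IH z_t) orbT.
Qed.

Lemma maxl_mem (l : seq R) : l != [::] -> maxl l \in l.
Proof.
case: l => [//|r t] _ /=; elim: t => [|a t IH] /=; first by rewrite inE.
rewrite /Num.max; case: ifP => _; last by rewrite !inE eqxx orbT.
by move: IH; rewrite !inE => /orP [->|->]; rewrite ?orbT.
Qed.

Lemma maxl_le (l : seq R) t : l != [::] -> (forall z, z \in l -> z <= t) -> maxl l <= t.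
Proof. by move=> /maxl_mem l_max le_t; apply: le_t. Qed.

Lemma minl_le (l : seq R) z : z \in l -> minl l <= z.
Proof.
case: l => [//|r t] /=; rewrite inE => /orP [/eqP ->|].
  by elim: t => [|a t IH] //=; rewrite ge_min IH orbT.
elim: t => [//|a t IH]; rewrite inE => /orP [/eqP ->|z_t] /=.
  by rewrite ge_min lexx.
by rewrite ge_min (IH z_t) orbT.
Qed.

Lemma minl_mem (l : seq R) : l != [::] -> minl l \in l.
Proof.
case: l => [//|r t] _ /=; elim: t => [|a t IH] /=; first by rewrite inE.
rewrite /Num.min; case: ifP => _; first by rewrite !inE eqxx orbT.
by move: IH; rewrite !inE => /orP [->|->]; rewrite ?orbT.
Qed.

End SeqExtrema.

Lemma count_ge_nth_sorted (d : Order.disp_t) (T : orderType d) (x0 : T) (s : seq T) i :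
  sorted (fun p q => (q <= p)%O) s -> (i < size s)%N ->
  (i.+1 <= count (fun r => (nth x0 s i <= r)%O) s)%N.
Proof.
move=> s_sorted i_lt.
have ge_trans : transitive (fun p q : T => (q <= p)%O).
  by move=> b c f le_bc le_fb; exact: le_trans le_fb le_bc.
rewrite -[X in count _ X](cat_take_drop i.+1 s) count_cat; apply: leq_trans (leq_addr _ _).
have size_take_i : size (take i.+1 s) = i.+1 by rewrite size_takel.
apply/eq_leq/esym/eqP; rewrite -[X in _ == X]size_take_i -all_count.
apply/(all_nthP x0) => j; rewrite size_take_i ltnS => le_ji; rewrite nth_take //.
by apply: (sorted_leq_nth ge_trans (fun r => lexx r) x0 s_sorted) => //; rewrite inE; lia.
Qed.

Lemma nth_filter_geq (T : Type) (P : pred T) x0 (q : seq T) i :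
  (i < size (filter P q))%N ->
  exists2 j, (i <= j < size q)%N & nth x0 (filter P q) i = nth x0 q j.
Proof.
elim: q i => [//|a q IH] i /=; case: (P a) => /=.
  case: i => [|i] /= i_lt; first by exists 0%N.
  by have [j j_bnd E] := IH i i_lt; exists j.+1.
move=> i_lt; have [j /andP [le_ij lt_j] E] := IH i i_lt.
by exists j.+1; rewrite //= ltnS lt_j andbT leqW.
Qed.

Lemma enum_setD1 (T : finType) (A : {set T}) v : rem v (enum A) = enum (A :\ v).
Proof.
rewrite rem_filter ?enum_uniq // /enum_mem -filter_predI; apply: eq_filter => w.
by rewrite /= in_setD1.
Qed.

Lemma enum_subset_filter (T : finType) (A B : {set T}) :
  B \subset A -> enum B = filter (mem B) (enum A).
Proof.
move=> /subsetP sBA; rewrite /enum_mem -filter_predI; apply: eq_filter => w /=.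
by case Bw: (w \in B); rewrite // sBA.
Qed.

Section Schedule.
Variables (R : realType) (T : eqType) (rho : R).
Hypothesis rho_ge0 : 0 <= rho.

(* [sched d q c]: the children in q are called in this order, the i-th one at time
   (i+1) rho, and child v then needs c v more; [d] is only a default for [nth].
   [best_sched] minimises over all orders and is verbatim the recursive step of
   [bfuel]. *)
Definition sched (d : T) (q : seq T) (c : T -> R) : R :=
  maxl [seq (i.+1)%:R * rho + c (nth d q i) | i <- iota 0 (size q)].

Definition best_sched (N : seq T) (c : T -> R) : R :=
  match N with
  | [::] => 0
  | v0 :: _ => minl [seq sched v0 q c | q <- permutations N]
  end.

Lemma sched_ge d q c i : (i < size q)%N -> (i.+1)%:R * rho + c (nth d q i) <= sched d q c.
Proof. by move=> lt_i; apply: maxl_ge; apply/mapP; exists i; rewrite // mem_iota. Qed.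

Lemma sched_attained d q c : q != [::] ->
  exists2 i, (i < size q)%N & sched d q c = (i.+1)%:R * rho + c (nth d q i).
Proof.
move=> q_nil.
have : sched d q c \in [seq (i.+1)%:R * rho + c (nth d q i) | i <- iota 0 (size q)].
  by apply: maxl_mem; case: q q_nil.
by case/mapP => i; rewrite mem_iota add0n => lt_i ->; exists i.
Qed.

Lemma sched_default d d' q c : sched d q c = sched d' q c.
Proof.
congr maxl; apply/eq_in_map => i; rewrite mem_iota add0n => lt_i.
by rewrite (set_nth_default d' d lt_i).
Qed.

Lemma best_sched_le N c q d : perm_eq q N -> best_sched N c <= sched d q c.
Proof.
case: N => [|v0 N] qN; first by move: (perm_size qN); case: q qN.
rewrite /best_sched (sched_default d v0); apply: minl_le; apply/mapP; exists q => //.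
by rewrite mem_permutations.
Qed.

Lemma best_sched_attained N c d : N != [::] ->
  exists2 q, perm_eq q N & best_sched N c = sched d q c.
Proof.
case: N => [//|v0 N] _.
have : best_sched (v0 :: N) c \in [seq sched v0 q c | q <- permutations (v0 :: N)].
  apply: minl_mem; have : v0 :: N \in permutations (v0 :: N) by rewrite mem_permutations.
  by case: (permutations _).
case/mapP => q; rewrite mem_permutations => qN ->; exists q => //.
exact: sched_default.
Qed.

Lemma best_sched_mono N c c' : (forall v, v \in N -> c v <= c' v) ->
  best_sched N c <= best_sched N c'.
Proof.
case: N => [//|v0 N] le_cc'.
have [q qN ->] := best_sched_attained c' v0 (isT : v0 :: N != [::]).
have q_nil : q != [::] by move: (perm_size qN); case: q qN.
apply: le_trans (best_sched_le c v0 qN) _.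
have [j lt_j ->] := sched_attained v0 c q_nil.
apply: le_trans (sched_ge v0 c' lt_j).
by rewrite lerD2l le_cc' // -(perm_mem qN) mem_nth.
Qed.

Lemma eq_in_best_sched N c c' : {in N, c =1 c'} -> best_sched N c = best_sched N c'.
Proof. by move=> eq_cc'; apply/eqP; rewrite eq_le !best_sched_mono // => v /eq_cc' ->. Qed.

Lemma best_sched_ge N c v : v \in N -> rho + c v <= best_sched N c.
Proof.
move=> vN; have N_nil : N != [::] by case: N vN.
have [q qN ->] := best_sched_attained c v N_nil.
have vq : v \in q by rewrite (perm_mem qN).
apply: le_trans (sched_ge v c (_ : index v q < size q)%N); last by rewrite index_mem.
by rewrite nth_index // lerD2r ler_peMl // ler1n.
Qed.

Lemma best_sched_ge0 N c : (forall v, v \in N -> 0 <= c v) -> 0 <= best_sched N c.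
Proof.
case: N => [//|v0 N] c_ge0; apply: le_trans (best_sched_ge c (mem_head v0 N)).
by rewrite addr_ge0 // c_ge0 // mem_head.
Qed.

Lemma best_sched_le_max N c v : v \in N ->
  best_sched N c <= Num.max (rho + c v) (rho + best_sched (rem v N) c).
Proof.
move=> vN; have Nv := perm_to_rem vN.
case rem_v: (rem v N) => [|w r].
  rewrite rem_v perm_sym in Nv.
  by apply: le_trans (best_sched_le c v Nv) _; rewrite /sched /= mul1r le_max lexx.
have [q qr ->] := best_sched_attained c v (isT : w :: r != [::]).
have vqN : perm_eq (v :: q) N.
  by rewrite perm_sym (perm_trans Nv) // perm_cons rem_v perm_sym.
apply: le_trans (best_sched_le c v vqN) _.
have [[|i] lt_i ->] := sched_attained v c (isT : v :: q != [::]).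
  by rewrite mul1r le_max lexx.
rewrite le_max; apply/orP; right.
apply: le_trans (_ : _ <= rho + ((i.+1)%:R * rho + c (nth v q i))) _.
  by rewrite -[(i.+2)%:R]natr1 mulrDl mul1r /=; lra.
by rewrite lerD2l sched_ge.
Qed.

Lemma best_sched_gap N (c c' : T -> R) w D : w \in N ->
  best_sched (rem w N) c <= c w -> D <= c' w - c w ->
  D <= best_sched N c' - best_sched N c.
Proof.
move=> wN rest_le gap; have := best_sched_ge c' wN.
have := best_sched_le_max c wN; rewrite le_max => /orP [] ?; lra.
Qed.

Lemma best_sched_filter N c (P : pred T) : (forall v, v \in N -> 0 <= c v) ->
  best_sched (filter P N) c <= best_sched N c.
Proof.
case: N => [//|v0 N'] c_ge0; set N := v0 :: N'.
have [q qN ->] := best_sched_attained c v0 (isT : N != [::]).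
case fP: (filter P N) => [|w r].
  by apply: le_trans (best_sched_le c v0 qN); exact: best_sched_ge0.
have fq : perm_eq (filter P q) (filter P N) by exact: perm_filter.
rewrite -fP; apply: le_trans (best_sched_le c v0 fq) _.
have fq_nil : filter P q != [::] by move: (perm_size fq); rewrite fP; case: (filter P q).
have [i lt_i ->] := sched_attained v0 c fq_nil.
have [j /andP [le_ij lt_j] ->] := nth_filter_geq v0 lt_i.
by apply: le_trans (sched_ge v0 c lt_j); rewrite lerD2r ler_wpM2r // ler_nat.
Qed.

Lemma best_sched_ge_count N (c : T -> R) k (t : R) : (1 <= k)%N ->
  (k <= count (fun v => (t <= c v)%R) N)%N -> k%:R * rho + t <= best_sched N c.
Proof.
case: N => [|v0 N'] k_ge1 k_le; first by case: k k_ge1 k_le.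
have [q qN ->] := best_sched_attained c v0 (isT : v0 :: N' != [::]).
rewrite -(permP qN) in k_le.
have : has (fun v => t <= c v) (drop k.-1 q).
  have take_le : (count (fun v => (t <= c v)%R) (take k.-1 q) <= k.-1)%N.
    by apply: leq_trans (count_size _ _) _; rewrite size_take; case: ltnP => // /ltnW.
  move: k_le; rewrite -[in count _ q](cat_take_drop k.-1 q) count_cat has_count; lia.
case/(has_nthP v0) => i; rewrite size_drop nth_drop => lt_i t_le.
apply: le_trans (sched_ge v0 c (_ : k.-1 + i < size q)%N); last by lia.
by apply: lerD => //; rewrite ler_wpM2r // ler_nat; lia.
Qed.

Lemma best_sched_le_sorted N c t : N != [::] ->
  (forall k, (1 <= k <= size N)%N ->
     k%:R * rho + nth 0 (sort (fun p q : R => q <= p) (map c N)) k.-1 <= t) ->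
  best_sched N c <= t.
Proof.
case: N => [//|v0 N'] _; set N := v0 :: N' => le_t.
set q := sort (relpre c (fun p q : R => q <= p)) N.
have qN : perm_eq q N by rewrite perm_sort.
apply: le_trans (best_sched_le c v0 qN) _; apply: maxl_le.
  by rewrite (perm_size qN) /=.
move=> z /mapP [i]; rewrite mem_iota add0n => lt_i ->.
have := le_t i.+1; rewrite sort_map (nth_map v0) // -(perm_size qN) /=; exact.
Qed.

(* Serving N by decreasing cost finishes by tau0 rho + a tau0, while w and the tau0
   costliest elements of N are tau0 + 1 children of cost at least a tau0. *)
Lemma best_sched_cons_ge N N' c w tau0 : perm_eq N' (w :: N) ->
  let a k := nth 0 (sort (fun p q : R => q <= p) (map c N)) k.-1 in
  (1 <= tau0 <= size N)%N ->
  (forall k, (1 <= k <= size N)%N -> k%:R * rho + a k <= tau0%:R * rho + a tau0) ->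
  a tau0 <= c w ->
  rho + best_sched N c <= best_sched N' c.
Proof.
move=> N'N a /andP [tau0_ge1 tau0_le] a_max a_w.
have N_nil : N != [::] by rewrite -size_eq0 -lt0n; exact: leq_trans tau0_le.
have sched_le := best_sched_le_sorted N_nil a_max.
have cnt : (tau0.+1 <= count (fun v => (a tau0 <= c v)%R) N')%N.
  rewrite (permP N'N) /= a_w add1n ltnS -(count_map c (fun r => a tau0 <= r)).
  have sortN : perm_eq (sort (fun p q : R => q <= p) (map c N)) (map c N) by rewrite perm_sort.
  rewrite -(permP sortN) -[tau0 in (tau0 <= _)%N]prednK //.
  apply: count_ge_nth_sorted; first by apply: sort_sorted => p r; exact: le_total.
  by rewrite size_sort size_map prednK.
have := best_sched_ge_count (isT : (1 <= tau0.+1)%N) cnt.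
rewrite -[tau0.+1%:R]natr1 mulrDl mul1r; lra.
Qed.

End Schedule.

Lemma best_sched_subset (R : realType) (T : finType) (rho : R) (A B : {set T}) c :
  0 <= rho -> A \subset B -> (forall v, v \in B -> 0 <= c v) ->
  best_sched rho (enum A) c <= best_sched rho (enum B) c.
Proof.
move=> rho_ge0 sAB c_ge0; rewrite (enum_subset_filter sAB).
by apply: best_sched_filter => // v; rewrite mem_enum; exact: c_ge0.
Qed.

Section EdgeCount.
Variables (V : finType) (g : rel V).
Hypotheses (g_sym : symmetric g) (g_connect : forall a b, connect g a b).

(* Breadth-first layers around r: [d v] is the first layer containing v and [par v] a
   neighbour of v in the previous layer. *)
Lemma exists_parent_map (r : V) : exists par : V -> V, exists d : V -> nat,
  forall v, v != r -> g v (par v) /\ (d (par v) < d v)%N.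
Proof.
pose layer := fix layer (k : nat) : {set V} :=
  if k is k'.+1 then layer k' :|: [set v | [exists w in layer k', g v w]] else [set r].
have layer_path p a :
    path g a p -> (exists k, a \in layer k) -> exists k, last a p \in layer k.
  elim: p a => [|b p IH] a //= /andP [g_ab g_p] [k a_k]; apply: IH => //; exists k.+1.
  by rewrite /= !inE; apply/orP; right; apply/existsP; exists a; rewrite a_k g_sym.
have reach v : exists k, v \in layer k.
  have /connectP [p g_p ->] := g_connect r v.
  by apply: layer_path g_p _; exists 0%N; rewrite /= inE.
pose d v := ex_minn (reach v).
have d_layer v : v \in layer (d v) by rewrite /d; case: ex_minnP.
have d_min v k : v \in layer k -> (d v <= k)%N.
  by move=> v_k; rewrite /d; case: ex_minnP => m _ /(_ k v_k).
exists (fun v => odflt r [pick w | (w \in layer (d v).-1) && g v w]), d => v v_r.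
have d_gt0 : (0 < d v)%N.
  case d_v: (d v) => //; have := d_layer v; rewrite d_v /= inE => /eqP v_eq.
  by rewrite v_eq eqxx in v_r.
have [w /andP [w_layer g_vw]] : exists w, (w \in layer (d v).-1) && g v w.
  have := d_layer v; case d_v: (d v) d_gt0 => [//|k] _ /=; rewrite inE => /orP [v_k|].
    by have := d_min v k v_k; rewrite d_v ltnn.
  by rewrite inE => /existsP [w /andP [w_k g_vw]]; exists w; rewrite w_k.
case: pickP => [u /andP [u_layer g_vu]|none]; last by have := none w; rewrite w_layer g_vw.
by split => //=; apply: leq_ltn_trans (d_min u _ u_layer) _; rewrite prednK.
Qed.

Lemma edge_count_lb : ((#|V| - 1).*2 <= #|[set p : V * V | g p.1 p.2]|)%N.
Proof.
case: (pickP (fun _ : V => true)) => [r _|V0]; last first.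
  by rewrite (_ : #|V| = 0%N) //; apply: eq_card0 => v; have := V0 v.
have [par [d par_ok]] := exists_parent_map r.
pose A := [set v | v != r].
pose up v := (v, par v); pose down v := (par v, v).
have up_inj : injective up by move=> u v [].
have down_inj : injective down by move=> u v [].
have sub_edges : (up @: A) :|: (down @: A) \subset [set p : V * V | g p.1 p.2].
  apply/subsetP => p; rewrite in_setU => /orP [] /imsetP [v v_A ->];
    move: v_A; rewrite /A inE => v_r; have [g_v _] := par_ok v v_r; by rewrite inE //= g_sym.
have disj : (up @: A) :&: (down @: A) = set0.
  apply/setP => p; rewrite !inE; apply/negP => /andP [/imsetP [u] u_r -> /imsetP [v] v_r].
  case=> u_eq v_eq; move: u_r v_r; rewrite /A !inE => u_r v_r.
  have [_ lt_u] := par_ok u u_r; have [_ lt_v] := par_ok v v_r.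
  by move: lt_u lt_v; rewrite v_eq -u_eq => lt_vu /(ltn_trans lt_vu); rewrite ltnn.
have card_A : #|A| = (#|V| - 1)%N.
  by rewrite subn1 -(cardsC1 r); apply: eq_card => w; rewrite !inE.
apply: leq_trans (subset_leq_card sub_edges).
by rewrite cardsU disj cards0 subn0 !card_imset // card_A addnn.
Qed.

End EdgeCount.

Section Tree.
Variables (V : finType) (e : rel V).
Hypothesis tree : is_tree e.

Lemma tree_sym : symmetric e. Proof. by case: tree. Qed.

Lemma edge_neq a b : e a b -> a != b.
Proof. by case: tree => _ e_irr _ _; apply: contraTneq => ->; rewrite e_irr. Qed.

Definition restr (A : {set V}) : rel V := fun a b => [&& e a b, a \in A & b \in A].

Lemma restr_sym A : symmetric (restr A).
Proof. by move=> a b; rewrite /restr tree_sym; case: (a \in A); rewrite ?andbF ?andbT. Qed.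

Lemma path_restr (A : {set V}) u p :
  path e u p -> all [in A] (u :: p) -> path (restr A) u p.
Proof.
elim: p u => [//|v p IH] u /= /andP [e_uv e_p] /and3P [u_A v_A all_p].
by rewrite /restr e_uv u_A v_A IH //= v_A.
Qed.

Lemma connect_restr_mem (A : {set V}) u w : connect (restr A) u w -> u \in A -> w \in A.
Proof.
case/connectP => p + -> {w}; elim: p u => [//|v p IH] u /= /andP [/and3P [_ _ v_A] p_path] _.
exact: IH p_path v_A.
Qed.

Lemma connect_restr_sub (A B : {set V}) u w :
  A \subset B -> connect (restr A) u w -> connect (restr B) u w.
Proof.
move=> /subsetP sAB; apply: connect_sub => a b /and3P [e_ab a_A b_A].
by apply: connect1; rewrite /restr e_ab !sAB.
Qed.

Lemma connect_restrI (A B : {set V}) c z : connect (restr A) c z ->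
  (forall w, connect (restr A) c w -> w \in B) -> connect (restr (A :&: B)) c z.
Proof.
case/connectP => p p_path -> in_B; apply/connectP; exists p => //.
suff gen q u : connect (restr A) c u -> path (restr A) u q -> path (restr (A :&: B)) u q.
  exact: gen (connect0 _ _) p_path.
elim: q u => [//|v q IH] u c_u /= /andP [r_uv q_path].
have c_v : connect (restr A) c v by apply: connect_trans c_u (connect1 r_uv).
case/and3P: r_uv => e_uv u_A v_A.
by rewrite /restr e_uv !inE u_A v_A (in_B _ c_u) (in_B _ c_v) /= IH.
Qed.

Lemma mem_Tsub a b z :
  (z \in Tsub e a b) = (z != a) && connect (restr ([set: V] :\ a)) b z.
Proof. by rewrite /Tsub /Defs.comp inE in_setD1 in_setT andbT. Qed.

Lemma in_setTD1 (w b : V) : (w \in [set: V] :\ b) = (w != b).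
Proof. by rewrite !inE andbT. Qed.

Lemma Tsub_root a b : e a b -> b \in Tsub e a b.
Proof. by move=> e_ab; rewrite mem_Tsub connect0 andbT eq_sym edge_neq. Qed.

Lemma mem_Tsub_nb a b w : e a b -> e b w -> (w \in Tsub e a b) = (w != a).
Proof.
move=> e_ab e_bw; rewrite mem_Tsub; case: eqP => //= /eqP w_a.
by apply: connect1; rewrite /restr e_bw !in_setTD1 eq_sym edge_neq.
Qed.

Definition del_edge (a b : V) : rel V :=
  fun u v => e u v && ~~ (((u == a) && (v == b)) || ((u == b) && (v == a))).

Lemma del_edge_sym a b : symmetric (del_edge a b).
Proof.
move=> u v; rewrite /del_edge tree_sym.
by case: (u == a); case: (u == b); case: (v == a); case: (v == b); rewrite ?andbF.
Qed.

(* A connected graph on n vertices has at least n - 1 edges, and a tree has exactly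
   that many, so no edge of a tree can be deleted without disconnecting it. *)
Lemma del_edge_disconnects a b : e a b -> ~~ connect (del_edge a b) a b.
Proof.
move=> e_ab; apply/negP => conn_ab; have del_sym := @del_edge_sym a b.
have del_connect u v : connect (del_edge a b) u v.
  case: tree => _ _ e_connect _; apply: (connect_sub _ (e_connect u v)) => p q e_pq.
  case ab: ((p == a) && (q == b)); first by case/andP: ab => /eqP -> /eqP ->.
  case ba: ((p == b) && (q == a)).
    by case/andP: ba => /eqP -> /eqP ->; rewrite (sym_connect_sym del_sym).
  by apply: connect1; rewrite /del_edge e_pq ab ba.
have del_edges : [set p : V * V | del_edge a b p.1 p.2] =
    [set p : V * V | e p.1 p.2] :\ (a, b) :\ (b, a).
  apply/setP => [[u v]]; rewrite !inE /= /del_edge !xpair_eqE.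
  by case: (e u v); case: (u == a); case: (u == b); case: (v == a); case: (v == b).
have card_edges : #|[set p : V * V | e p.1 p.2]| =
    (#|[set p : V * V | del_edge a b p.1 p.2]| + 2)%N.
  rewrite del_edges (cardsD1 (a, b)) inE /= e_ab (cardsD1 (b, a)).
  by rewrite !inE /= xpair_eqE (negbTE (edge_neq e_ab)) tree_sym e_ab /= andbF /=; lia.
have card_V : (2 <= #|V|)%N.
  by have := subset_leq_card (subsetT [set a; b]); rewrite cards2 edge_neq // cardsT.
have := edge_count_lb del_sym del_connect; case: tree => _ _ _; rewrite card_edges; lia.
Qed.

Lemma Tsub_disjoint a b z : e a b -> z \in Tsub e a b -> z \in Tsub e b a -> False.
Proof.
move=> e_ab; rewrite !mem_Tsub => /andP [_ b_z] /andP [_ a_z].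
have restr_del (A : {set V}) : a \notin A \/ b \notin A ->
    subrel (restr A) (connect (del_edge a b)).
  move=> ab_A u v /and3P [e_uv u_A v_A]; apply: connect1; rewrite /del_edge e_uv /=.
  by case: ab_A => ab_A; apply/negP => /orP [] /andP [/eqP u_eq /eqP v_eq];
    move: ab_A; rewrite -?u_eq -?v_eq ?u_A ?v_A.
have del_b_z : connect (del_edge a b) b z.
  by apply: (connect_sub (restr_del _ _)) b_z; left; rewrite in_setD1 eqxx.
have del_a_z : connect (del_edge a b) a z.
  by apply: (connect_sub (restr_del _ _)) a_z; right; rewrite in_setD1 eqxx.
move/negP: (del_edge_disconnects e_ab); apply; apply: connect_trans del_a_z _.
by rewrite (sym_connect_sym (@del_edge_sym a b)).
Qed.

Lemma Tsub_edge_compl a b : e a b -> Tsub e a b = ~: Tsub e b a.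
Proof.
move=> e_ab; apply/setP => z; rewrite in_setC; apply/idP/idP.
  by move=> z_ab; apply/negP; exact: Tsub_disjoint e_ab z_ab.
case: tree => _ _ e_connect _; have /connectP [p p_path ->] := e_connect b z.
case: (shortenP p_path) => q q_path q_uniq _ not_ba.
have ab := edge_neq e_ab.
case a_q: (a \in q).
  move: q_path q_uniq not_ba; case/splitPr: a_q => q1 q2.
  rewrite cat_path last_cat /= => /andP [_ /andP [_ q2_path]] q_uniq.
  have b_q2 : b \notin a :: q2.
    by move: q_uniq; rewrite /= mem_cat negb_or => /andP [/andP [_ ->] _].
  move/negP; case; rewrite mem_Tsub; apply/andP; split.
    by apply: contraNneq b_q2 => <-; exact: mem_last.
  apply/connectP; exists q2 => //; apply: path_restr => //.
  by apply/allP => w w_q2; rewrite /= in_setTD1; apply: contraNneq b_q2 => <-.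
have a_bq : a \notin b :: q by rewrite inE negb_or ab a_q.
rewrite mem_Tsub; apply/andP; split; first by apply: contraNneq a_bq => <-; exact: mem_last.
apply/connectP; exists q => //; apply: path_restr => //.
by apply/allP => w w_q; rewrite /= in_setTD1; apply: contraNneq a_bq => <-.
Qed.

Lemma Tbar_edge a b : e a b -> Tbar e b a = Tsub e a b.
Proof. by move=> e_ab; rewrite /Tbar (Tsub_edge_compl e_ab). Qed.

Lemma comp_mem_eq (S : {set V}) u v z :
  z \in Defs.comp e S u v -> Defs.comp e S u z = Defs.comp e S u v.
Proof.
rewrite /Defs.comp inE => /andP [_ v_z]; have r_sym := sym_connect_sym (restr_sym (S :\ u)).
apply/setP => w; rewrite !inE; congr andb; apply/idP/idP => w_conn.
  exact: connect_trans v_z w_conn.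
by apply: connect_trans _ w_conn; rewrite r_sym.
Qed.

Lemma comp_Tsub a b c : e a b -> e b c -> c != a -> Defs.comp e (Tsub e a b) b c = Tsub e b c.
Proof.
move=> e_ab e_bc c_a; have ab := edge_neq e_ab.
have c_ab : c \in Tsub e a b by rewrite mem_Tsub_nb.
have c_ba : c \notin Tsub e b a by apply/negP; exact: Tsub_disjoint e_ab c_ab.
have sub_ba_cb : Tsub e b a \subset Tsub e c b.
  apply/subsetP => z z_ba; move: (z_ba); rewrite mem_Tsub => /andP [z_b a_z].
  have a_z_in : connect (restr (([set: V] :\ b) :&: Tsub e b a)) a z.
    apply: (connect_restrI (B := Tsub e b a) a_z) => w a_w; rewrite mem_Tsub a_w andbT.
    by rewrite -in_setTD1; apply: connect_restr_mem a_w _; rewrite in_setTD1.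
  rewrite mem_Tsub; apply/andP; split; first by apply: contraNneq c_ba => <-.
  have r_ba : restr ([set: V] :\ c) b a.
    by rewrite /restr tree_sym e_ab !in_setTD1 (edge_neq e_bc) eq_sym c_a.
  apply: connect_trans (connect1 r_ba) (connect_restr_sub _ a_z_in).
  apply/subsetP => w; rewrite in_setI => /andP [_ w_ba].
  by rewrite in_setTD1; apply: contraNneq c_ba => <-.
have sub_bc_ab : Tsub e b c \subset Tsub e a b :\ b.
  apply/subsetP => z z_bc; rewrite in_setD1.
  have -> /= : z != b by move: z_bc; rewrite mem_Tsub => /andP [].
  rewrite (Tsub_edge_compl e_ab) inE; apply/negP => z_ba.
  exact: Tsub_disjoint e_bc z_bc (subsetP sub_ba_cb _ z_ba).
apply/setP => z; rewrite {1}/Defs.comp inE; apply/idP/idP.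
  case/andP; rewrite in_setD1 => /andP [z_b _] c_z; rewrite mem_Tsub z_b /=.
  apply: connect_restr_sub c_z.
  by apply/subsetP => w; rewrite !in_setD1 in_setT => /andP [-> _].
move=> z_bc; rewrite (subsetP sub_bc_ab _ z_bc) /=.
move: z_bc; rewrite mem_Tsub => /andP [_ c_z].
change (connect (restr (Tsub e a b :\ b)) c z).
have c_z_in : connect (restr (([set: V] :\ b) :&: Tsub e b c)) c z.
  apply: (connect_restrI (B := Tsub e b c) c_z) => w c_w; rewrite mem_Tsub c_w andbT.
  by rewrite -in_setTD1; apply: connect_restr_mem c_w _; rewrite in_setTD1 eq_sym edge_neq.
apply: connect_restr_sub c_z_in.
by apply/subsetP => w; rewrite inE => /andP [_ /(subsetP sub_bc_ab)].
Qed.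

End Tree.

Section PathsInTree.
Variables (V : finType) (e : rel V).
Hypothesis tree : is_tree e.

Lemma on_path_swap x y a b : on_path e x y a b -> on_path e x y b a.
Proof.
by case=> p [p_path p_last p_uniq [i lt_i ab_i]]; exists p; split => //; exists i; rewrite // orbC.
Qed.

Lemma inE_set_swap (A : {set V}) a b : inE_set e A a b -> inE_set e A b a.
Proof. by rewrite /inE_set (tree_sym tree) => /and3P [-> -> ->]. Qed.

Lemma on_path_sym x y a b : on_path e x y a b -> on_path e y x a b.
Proof.
case=> p [p_path p_last p_uniq [i lt_i ab_i]].
have rev_xp : y :: rev (belast x p) = rev (x :: p) by rewrite [x :: p]lastI rev_rcons p_last.
exists (rev (belast x p)); split.
- by rewrite -p_last rev_path; apply: sub_path p_path => u v; rewrite (tree_sym tree).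
- by case: (p) lt_i => //= p0 p' _; rewrite rev_cons last_rcons.
- by rewrite rev_xp rev_uniq.
exists (size p - i.+1)%N; first by rewrite size_rev size_belast; lia.
have lt_j : (size p - i.+1 < size (x :: p))%N by rewrite /=; lia.
have lt_j1 : ((size p - i.+1).+1 < size (x :: p))%N by rewrite /=; lia.
rewrite rev_xp !nth_rev // !(set_nth_default x y) /=; try lia.
have -> : ((size p).+1 - (size p - i.+1).+1 = i.+1)%N by lia.
have -> : ((size p).+1 - (size p - i.+1).+2 = i)%N by lia.
by case/orP: ab_i => /andP [/eqP <- /eqP <-]; rewrite !eqxx ?orbT.
Qed.

Lemma on_path_Tsub y x mu : on_path e y x y mu -> exists p,
  [/\ path e mu p, last mu p = x, uniq (y :: mu :: p) & all [in Tsub e y mu] (mu :: p)].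
Proof.
case=> q [q_path q_last q_uniq [i lt_i edge_i]].
have lt_i1 : (i.+1 < size (y :: q))%N by [].
have i0 : i = 0%N.
  case/orP: edge_i => /andP [/eqP nth_i /eqP nth_i1].
    by apply/eqP; rewrite -(nth_uniq y (ltnW lt_i1) _ q_uniq) // nth_i.
  by have := nth_uniq y lt_i1 (isT : 0 < size (y :: q))%N q_uniq; rewrite nth_i1 eqxx.
move: i0 edge_i lt_i => -> {lt_i1}.
case: q q_path q_last q_uniq => [//|m p] /= /andP [_ p_path].
move=> p_last /andP [y_mp p_uniq] /orP [] /andP [_ /eqP m_eq] _.
  subst m; have p_in : all [in Tsub e y mu] (mu :: p).
    apply/allP => z z_mp; rewrite mem_Tsub; apply/andP; split.
      by apply: contraNneq y_mp => <-.
    apply: (path_connect (path_restr p_path _)) z_mp.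
    by apply/allP => w w_mp; rewrite in_setTD1; apply: contraNneq y_mp => <-.
  by exists p; split => //; apply/andP.
by move: y_mp; rewrite m_eq inE eqxx.
Qed.

End PathsInTree.

Section BroadcastTime.
Variables (R : realType) (V : finType) (e : rel V) (rho : R).
Hypothesis tree : is_tree e.
Implicit Types (s : V -> V -> R) (S : {set V}).

Lemma bfuelS s n u S : bfuel e rho s n.+1 u S =
  best_sched rho (enum [set v in S | e u v])
    (fun v => s u v + bfuel e rho s n v (Defs.comp e S u v)).
Proof. by []. Qed.

Lemma comp_sub S u v : Defs.comp e S u v \subset S :\ u.
Proof. by apply/subsetP => z; rewrite inE => /andP []. Qed.

Lemma comp_root S u v : v \in S -> e u v -> v \in Defs.comp e S u v.
Proof.
move=> v_S e_uv; rewrite /Defs.comp inE connect0 andbT in_setD1 v_S andbT.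
by rewrite eq_sym (edge_neq tree e_uv).
Qed.

Lemma card_comp_lt S u v : u \in S -> (#|Defs.comp e S u v| < #|S|)%N.
Proof.
move=> u_S; apply: leq_ltn_trans (subset_leq_card (comp_sub S u v)) _.
by rewrite (cardsD1 u S) u_S add1n ltnS.
Qed.

Lemma bfuel_sufficient s n m u S : u \in S -> (#|S| <= n)%N -> (#|S| <= m)%N ->
  bfuel e rho s n u S = bfuel e rho s m u S.
Proof.
elim: n m u S => [|n IH] [|m] u S u_S le_n le_m //;
  have S_gt0 : (0 < #|S|)%N by apply/card_gt0P; exists u.
1,2: lia.
rewrite !bfuelS; apply: eq_in_best_sched => v; rewrite mem_enum inE => /andP [v_S e_uv].
have lt_card := card_comp_lt v u_S.
by congr (_ + _); apply: IH; rewrite ?comp_root //; lia.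
Qed.

Lemma btime_rec s u S : u \in S ->
  btime e rho s u S = best_sched rho (enum [set v in S | e u v])
    (fun v => s u v + btime e rho s v (Defs.comp e S u v)).
Proof.
move=> u_S; rewrite /btime; have : (0 < #|S|)%N by apply/card_gt0P; exists u.
case card_S: #|S| => [//|n] _; rewrite bfuelS; apply: eq_in_best_sched => v.
rewrite mem_enum inE => /andP [v_S e_uv]; congr (_ + _); apply: bfuel_sufficient => //.
  exact: comp_root.
by rewrite -ltnS -card_S card_comp_lt.
Qed.

Lemma btime_ge0 s u S : 0 <= rho -> (forall a b, e a b -> 0 <= s a b) ->
  0 <= btime e rho s u S.
Proof.
move=> rho_ge0 s_ge0; rewrite /btime; move: #|S| => n; elim: n u S => [//|n IH] u S.
rewrite bfuelS; apply: best_sched_ge0 => // v; rewrite mem_enum inE => /andP [_ e_uv].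
by rewrite addr_ge0 ?s_ge0.
Qed.

Lemma btime_mono s s' u S : u \in S ->
  (forall a b, e a b -> a \in S -> b \in S -> s a b <= s' a b) ->
  btime e rho s u S <= btime e rho s' u S.
Proof.
rewrite /btime; move: #|S| => n; elim: n u S => [//|n IH] u S u_S le_ss'.
rewrite !bfuelS; apply: best_sched_mono => v; rewrite mem_enum inE => /andP [v_S e_uv].
rewrite lerD ?le_ss' // IH ?comp_root // => a b e_ab a_in b_in.
by have /subsetP sub := comp_sub S u v; move: (sub a a_in) (sub b b_in);
  rewrite !in_setD1 => /andP [_ a_S] /andP [_ b_S]; exact: le_ss'.
Qed.

Lemma eq_in_btime s s' u S : u \in S ->
  (forall a b, e a b -> a \in S -> b \in S -> s a b = s' a b) ->
  btime e rho s u S = btime e rho s' u S.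
Proof.
by move=> u_S eq_ss'; apply/eqP; rewrite eq_le !btime_mono // => a b *; rewrite eq_ss'.
Qed.

Definition branch_time s a b : R := btime e rho s b (Tsub e a b).

Definition child_time s u v : R := s u v + branch_time s u v.

Lemma branch_time_rec s a b : e a b ->
  branch_time s a b = best_sched rho (enum ([set v | e b v] :\ a)) (child_time s b).
Proof.
move=> e_ab; rewrite /branch_time btime_rec; last exact: Tsub_root.
have -> : [set v in Tsub e a b | e b v] = [set v | e b v] :\ a.
  apply/setP => v; rewrite in_setD1 [in RHS]in_set [in LHS]in_set.
  by case e_bv: (e b v); rewrite ?andbF ?andbT // mem_Tsub_nb.
apply: eq_in_best_sched => v; rewrite mem_enum in_setD1 inE => /andP [v_a e_bv].
by rewrite /child_time /branch_time comp_Tsub.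
Qed.

Lemma btime_root_rec s x :
  btime e rho s x [set: V] = best_sched rho (enum [set v | e x v]) (child_time s x).
Proof.
rewrite btime_rec ?in_setT //; congr best_sched.
by apply/eq_enum => v; rewrite !inE.
Qed.

Lemma child_time_ge0 s u v : 0 <= rho -> (forall a b, e a b -> 0 <= s a b) -> e u v ->
  0 <= child_time s u v.
Proof. by move=> rho_ge0 s_ge0 e_uv; rewrite addr_ge0 ?s_ge0 ?btime_ge0. Qed.

End BroadcastTime.

Section GapPropagation.
Variables (R : realType) (V : finType) (e : rel V) (rho : R).
Hypotheses (tree : is_tree e) (rho_ge0 : 0 <= rho).
Variables (s s' : V -> V -> R) (D B M : R).
Hypotheses (s_ge0 : forall a b, e a b -> 0 <= s a b) (M_le_B : M <= B).

Local Notation br := (branch_time e rho).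
Local Notation ct := (child_time e rho).

(* [w] is the neighbour of [u] towards y: alpha gains at least D on the branch at w,
   and under s that branch outweighs the branch of u away from w. *)
Definition gap_inv (w u : V) : Prop :=
  [/\ D <= br s' u w - br s u w, B <= br s u w & br s w u <= M].

Lemma other_children_le w u (A : {set V}) : e w u -> A \subset [set z | e u z] :\ w ->
  gap_inv w u -> best_sched rho (enum A) (ct s u) <= ct s u w.
Proof.
move=> e_wu sub_A [_ B_le le_M].
have ct_ge0 v : v \in [set z | e u z] :\ w -> 0 <= ct s u v.
  by rewrite in_setD1 inE => /andP [_ e_uv]; exact: child_time_ge0.
apply: le_trans (best_sched_subset rho_ge0 sub_A ct_ge0) _.
rewrite -branch_time_rec // /child_time (le_trans le_M) // (le_trans M_le_B) //.
by rewrite (le_trans B_le) // lerDr s_ge0 // (tree_sym tree).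
Qed.

Lemma gap_at w u (A : {set V}) : e w u -> w \in A -> A \subset [set z | e u z] ->
  s' u w = s u w -> gap_inv w u ->
  D <= best_sched rho (enum A) (ct s' u) - best_sched rho (enum A) (ct s u).
Proof.
move=> e_wu w_A sub_A s'_uw inv_wu.
apply: (best_sched_gap rho_ge0 (w := w)); first by rewrite mem_enum.
  rewrite enum_setD1; apply: other_children_le => //.
  by apply/subsetP => z; rewrite !in_setD1 => /andP [-> /(subsetP sub_A)].
by case: inv_wu; rewrite /child_time s'_uw opprD addrACA subrr add0r.
Qed.

Lemma gap_inv_step w u v : e w u -> e u v -> v != w -> s' u w = s u w ->
  gap_inv w u -> gap_inv u v.
Proof.
move=> e_wu e_uv v_w s'_uw inv_wu; have e_vu : e v u by rewrite (tree_sym tree).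
have w_in : w \in [set z | e u z] :\ v by rewrite in_setD1 eq_sym v_w inE (tree_sym tree).
have v_in : v \in [set z | e u z] :\ w by rewrite in_setD1 v_w inE.
have ct_v_le : rho + ct s u v <= br s w u.
  by rewrite branch_time_rec //; apply: (best_sched_ge rho_ge0); rewrite mem_enum.
have ct_w_le : rho + ct s u w <= br s v u.
  by rewrite branch_time_rec //; apply: (best_sched_ge rho_ge0); rewrite mem_enum.
have s_uv := s_ge0 e_uv; have s_uw : 0 <= s u w by rewrite s_ge0 // (tree_sym tree).
move: ct_v_le ct_w_le; rewrite /child_time.
case: (inv_wu) => _ B_le le_M ct_v_le ct_w_le; split.
- by rewrite !branch_time_rec //; apply: (gap_at (w := w)); rewrite ?subD1set.
- apply: le_trans B_le (le_trans _ ct_w_le).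
  exact: ler_wpDl rho_ge0 (ler_wpDl s_uw (lexx _)).
- apply: le_trans (le_trans _ ct_v_le) le_M.
  exact: ler_wpDl rho_ge0 (ler_wpDl s_uv (lexx _)).
Qed.

Lemma gap_inv_root w x : e w x -> s' x w = s x w -> gap_inv w x ->
  D <= btime e rho s' x [set: V] - btime e rho s x [set: V].
Proof.
move=> e_wx s'_xw inv_wx; rewrite !btime_root_rec //.
by apply: (gap_at (w := w)); rewrite // inE (tree_sym tree).
Qed.

Lemma gap_inv_path (T : {set V}) :
  (forall a b, e a b -> a \in T -> b \in T -> s' a b = s a b) ->
  forall p w u x, e w u -> path e u p -> last u p = x -> uniq (w :: u :: p) ->
  all [in T] (u :: p) -> s' u w = s u w -> gap_inv w u ->
  D <= btime e rho s' x [set: V] - btime e rho s x [set: V].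
Proof.
move=> s'_T; elim=> [|v p IH] w u x e_wu /=.
  by move=> _ <- _ _; exact: gap_inv_root.
case/andP => e_uv p_path p_last /andP [w_uvp uvp_uniq] /and3P [u_T v_T p_T] s'_uw inv_wu.
have v_w : v != w by apply: contraNneq w_uvp => ->; rewrite !inE eqxx orbT.
apply: (IH u v x e_uv p_path p_last uvp_uniq); first by rewrite /= v_T.
  by rewrite s'_T // (tree_sym tree).
exact: gap_inv_step inv_wu.
Qed.

End GapPropagation.

Section Regret.
Variables (R : realType) (V : finType) (e : rel V) (rho : R).
Hypotheses (tree : is_tree e) (rho_ge0 : 0 <= rho).

Local Notation br := (branch_time e rho).

Lemma regret_le_raise_far_side (s s' : V -> V -> R) x y mu p :
  (forall a b, e a b -> 0 <= s a b) -> e y mu ->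
  path e mu p -> last mu p = x -> uniq (y :: mu :: p) -> all [in Tsub e y mu] (mu :: p) ->
  (forall a b, e a b -> a \in Tsub e y mu -> b \in Tsub e y mu -> s' a b = s a b) ->
  s' y mu = s y mu -> s' mu y = s mu y ->
  (forall a b, e a b -> a \in Tsub e mu y -> b \in Tsub e mu y -> s a b <= s' a b) ->
  br s y mu <= br s mu y ->
  rho + br s mu y <= btime e rho s y [set: V] ->
  regret e rho s x y <= regret e rho s' x y.
Proof.
move=> s_ge0 e_ymu p_path p_last p_uniq p_in s'_near s'_ymu s'_muy s'_far prime dominant.
have e_muy : e mu y by rewrite (tree_sym tree).
have mu_nb : mu \in enum [set v | e y v] by rewrite mem_enum inE.
have gap : br s' mu y - br s mu y <=
    btime e rho s' x [set: V] - btime e rho s x [set: V].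
  by apply: (gap_inv_path tree rho_ge0 s_ge0 prime s'_near e_ymu p_path p_last p_uniq p_in
                           s'_muy).
have near_eq : br s' y mu = br s y mu.
  by apply: eq_in_btime => //; exact: Tsub_root.
have mu_first : btime e rho s' y [set: V] <=
    Num.max (rho + (s y mu + br s y mu)) (rho + br s' mu y).
  rewrite btime_root_rec //; apply: le_trans (best_sched_le_max _ _ mu_nb) _.
  by rewrite enum_setD1 -branch_time_rec // /child_time s'_ymu near_eq.
have mu_lb : rho + (s y mu + br s y mu) <= btime e rho s y [set: V].
  by rewrite btime_root_rec //; exact: (best_sched_ge rho_ge0 (child_time e rho s y) mu_nb).
have raise : br s mu y <= br s' mu y by apply: btime_mono => //; exact: Tsub_root.
by rewrite /regret; move: mu_first; rewrite le_max => /orP [] ?; lra.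
Qed.

Lemma tau_dominance (s : V -> V -> R) x y mu tau0 :
  (forall a b, e a b -> 0 <= s a b) -> e y mu -> x \in Tsub e y mu ->
  let U := [set u | e y u & u \in Tbar e y x] in
  let A := sort (fun p q : R => q <= p)
             [seq s y u + btime e rho s u (Tbar e u y) | u <- enum U] in
  let a (k : nat) := nth 0 A k.-1 in
  (1 <= tau0 <= #|U|)%N ->
  (forall k : nat, (1 <= k <= #|U|)%N -> k%:R * rho + a k <= tau0%:R * rho + a tau0) ->
  a tau0 <= s y mu + btime e rho s mu (Tsub e y x) ->
  rho + br s mu y <= btime e rho s y [set: V].
Proof.
move=> s_ge0 e_ymu x_in U A a tau_bnd tau_max tau_cond.
have e_muy : e mu y by rewrite (tree_sym tree).
have Tyx : Tsub e y x = Tsub e y mu := comp_mem_eq tree x_in.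
set N := enum ([set v | e y v] :\ mu).
have U_eq : U = [set v | e y v] :\ mu.
  apply/setP => v; rewrite in_setD1 [in RHS]in_set [in LHS]in_set /Tbar Tyx.
  rewrite -(Tsub_edge_compl tree e_muy).
  by case e_yv: (e y v); rewrite ?andbF // andbT (mem_Tsub_nb tree e_muy e_yv).
have card_U : #|U| = size N by rewrite U_eq cardE.
have a_eq k : a k = nth 0 (sort (fun p q : R => q <= p) (map (child_time e rho s y) N)) k.-1.
  rewrite /a /A /N -U_eq; congr (nth 0 (sort _ _) _); apply/eq_in_map => u.
  rewrite mem_enum inE => /andP [e_yu _].
  by rewrite /child_time /branch_time (Tbar_edge tree e_yu).
have nb_perm : perm_eq (enum [set v | e y v]) (mu :: N).
  by rewrite /N -enum_setD1 perm_to_rem // mem_enum inE.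
rewrite btime_root_rec // branch_time_rec //.
apply: (best_sched_cons_ge rho_ge0 (tau0 := tau0) nb_perm).
- by rewrite -card_U.
- by move=> k k_bnd; rewrite -!a_eq; apply: tau_max; rewrite card_U.
- by rewrite -a_eq /child_time /branch_time -Tyx.
Qed.

Lemma alpha_scenario (wlo whi : V -> V -> R) x v :
  (forall a b, e a b -> wlo a b <= whi a b) ->
  (forall a b, e a b -> wlo a b = wlo b a /\ whi a b = whi b a) ->
  scenario e wlo whi (alpha e wlo whi x v).
Proof.
move=> le_w sym_w a b e_ab; have [wlo_ab whi_ab] := sym_w a b e_ab.
have swap u w : on_path e x v u w \/ inE_set e (Tbar e v x) u w ->
    on_path e x v w u \/ inE_set e (Tbar e v x) w u.
  by case=> [/on_path_swap | /(inE_set_swap tree)]; [left | right].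
rewrite /alpha; split; first by case: asboolP => _; rewrite lexx le_w.
by case: asboolP => [/swap | not_ab]; case: asboolP => // not_ba; exfalso; auto.
Qed.

Lemma alpha_ge (wlo whi s : V -> V -> R) x v : scenario e wlo whi s ->
  forall a b, e a b -> inE_set e (Tbar e v x) a b -> s a b <= alpha e wlo whi x v a b.
Proof.
move=> s_sc a b e_ab ab_in; have [/andP [_ s_le] _] := s_sc a b e_ab.
by rewrite /alpha; case: asboolP => // -[]; right.
Qed.

Lemma worst_case_transfer (wlo whi s s' : V -> V -> R) x y :
  worst_case e rho wlo whi x s -> in_center e rho s y -> scenario e wlo whi s' ->
  regret e rho s x y <= regret e rho s' x y -> worst_case e rho wlo whi x s'.
Proof.
move=> [_ [y0 s_max]] y_center s'_sc le_regret; split => //; exists y => s'' y'' s''_sc.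
apply: le_trans (s_max s'' y'' s''_sc) (le_trans _ le_regret).
by rewrite /regret lerD2l lerN2.
Qed.

End Regret.

Theorem fact3 (R : realType) (V : finType) (e : rel V) (rho : R)
  (wlo whi : V -> V -> R) (x y mu : V) (s : V -> V -> R) (tau0 : nat) :
  is_tree e -> 0 < rho ->
  (forall a b, e a b -> 0 <= wlo a b <= whi a b) ->
  (forall a b, e a b -> wlo a b = wlo b a /\ whi a b = whi b a) ->
  worst_case e rho wlo whi x s ->
  y != x ->
  prime_center e rho s y ->
  (forall a b, e a b -> on_path e x y a b \/ inE_set e (Tsub e y x) a b ->
     s a b = alpha e wlo whi x y a b) ->
  e y mu -> on_path e y x y mu ->
  let U := [set u | e y u & u \in Tbar e y x] in
  let A := sort (fun p q : R => q <= p)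
             [seq s y u + btime e rho s u (Tbar e u y) | u <- enum U] in
  let a (k : nat) := nth 0 A k.-1 in
  (1 <= #|U|)%N ->
  (1 <= tau0 <= #|U|)%N ->
  (forall k : nat, (1 <= k <= #|U|)%N ->
     k%:R * rho + a k <= tau0%:R * rho + a tau0) ->
  (forall k : nat, (1 <= k < tau0)%N ->
     k%:R * rho + a k < tau0%:R * rho + a tau0) ->
  a tau0 <= s y mu + btime e rho s mu (Tsub e y x) ->
  worst_case e rho wlo whi x (alpha e wlo whi x y).
Proof.
move=> tree rho_gt0 w_bnd w_sym s_worst _ [y_center y_prime] s_alpha e_ymu yx_path
  U A a _ tau_bnd tau_max _ tau_cond.
have rho_ge0 := ltW rho_gt0; have e_muy : e mu y by rewrite (tree_sym tree).
have s_ge0 u v : e u v -> 0 <= s u v.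
  move=> e_uv; have [/andP [lo_s _] _] := s_worst.1 u v e_uv.
  by case/andP: (w_bnd u v e_uv) => lo_ge0 _; exact: le_trans lo_s.
have [p [p_path p_last p_uniq p_in]] := on_path_Tsub yx_path.
have x_in : x \in Tsub e y mu by rewrite -p_last; exact: (allP p_in) _ (mem_last _ _).
have Tyx : Tsub e y x = Tsub e y mu := comp_mem_eq tree x_in.
have Tbar_yx : Tbar e y x = Tsub e mu y by rewrite /Tbar Tyx (Tsub_edge_compl tree e_muy).
have edge_ymu : on_path e x y y mu := on_path_sym tree yx_path.
have le_w u v : e u v -> wlo u v <= whi u v by move=> /w_bnd /andP [].
apply: (worst_case_transfer s_worst y_center (alpha_scenario tree x y le_w w_sym)).
apply: (regret_le_raise_far_side tree rho_ge0 s_ge0 e_ymu p_path p_last p_uniq p_in).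
- by move=> u v e_uv u_in v_in; rewrite s_alpha //; right; rewrite /inE_set Tyx e_uv u_in v_in.
- by rewrite s_alpha //; left.
- by rewrite s_alpha //; left; exact: on_path_swap.
- move=> u v e_uv u_in v_in; apply: (alpha_ge s_worst.1) => //.
  by rewrite /inE_set Tbar_yx e_uv u_in v_in.
- by have := y_prime mu e_ymu; rewrite (Tbar_edge tree e_ymu) (Tbar_edge tree e_muy).
- exact: (tau_dominance tree rho_ge0 s_ge0 e_ymu x_in tau_bnd tau_max tau_cond).
Qed.
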